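(* Let $n\ge1$, $d=2^n$. For an $n$-qubit density matrix $\rho$ define $\tilde M_2(\rho)=-\log\frac{\sum_{P\in\mathcal{P}_n}\mathrm{tr}(P\rho)^4}{\sum_{P\in\mathcal{P}_n}\mathrm{tr}(P\rho)^2}$ (equivalently $\tilde M_2(\rho)=M_2(\rho)-S_2(\rho)$ with $M_2(\rho)=-\log\big(d\,\mathrm{tr}(Q\rho^{\otimes4})\big)$ and $S_2(\rho)=-\log\mathrm{tr}(\rho^2)$). Then: (i) $\tilde M_2(\rho)=0$ if and only if $\rho$ is a (mixed) stabilizer state; (ii) $\tilde M_2(C\rho C^\dagger)=\tilde M_2(\rho)$ for every $n$-qubit Clifford unitary $C$; (iii) $\tilde M_2(\rho\otimes\sigma)=\tilde M_2(\rho)+\tilde M_2(\sigma)$ for density matrices $\rho,\sigma$ on any numbers of qubits; in particular, if $S$ is a (mixed) stabilizer state then $\tilde M_2(\rho\otimes S)=\tilde M_2(\rho)$.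
   Context: Logarithms are base 2. $\mathcal{P}_n$ is the set of the $4^n$ $n$-qubit Pauli strings $\sigma_1\otimes\cdots\otimes\sigma_n$, $\sigma_i\in\{I,X,Y,Z\}$; $Q=d^{-2}\sum_{P\in\mathcal{P}_n}P^{\otimes4}$. The Clifford group consists of unitaries $C$ with $CPC^\dagger\in\{\pm1,\pm i\}\mathcal{P}_n$ for all $P\in\mathcal{P}_n$. A (mixed) stabilizer state is a positive semidefinite operator of the form $\chi=\frac{I}{d}+\frac1d\sum_{P\in G}\phi_P P$, where $G\subseteq\mathcal{P}_n\setminus\{I\}$ with $0\le|G|\le d-1$ and $\phi_P\in\{-1,+1\}$ (pure stabilizer states are exactly those with $|G|=d-1$). *)

From HB Require Import structures.
From mathcomp Require Import all_boot all_order all_algebra.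
From mathcomp Require Import complex mxtens.
From mathcomp Require Import reals exp.

Set Implicit Arguments.
Unset Strict Implicit.
Unset Printing Implicit Defensive.

Import Order.TTheory GRing.Theory Num.Theory.
Local Open Scope ring_scope.

Section Qubits.
Variable R : realType.
Local Notation C := R[i].

Definition log2 (x : R) : R := ln x / ln 2.

Definition adj {m k : nat} (A : 'M[C]_(m, k)) : 'M[C]_(k, m) :=
  (map_mx (@conjc R) A)^T.

Definition hermitian {d : nat} (A : 'M[C]_d) : Prop := adj A = A.

Definition psd {d : nat} (A : 'M[C]_d) : Prop :=
  hermitian A /\ forall v : 'cV[C]_d, 0 <= (adj v *m A *m v) 0 0.

Definition density {n : nat} (rho : 'M[C]_(2 ^ n)) : Prop :=
  psd rho /\ \tr rho = 1.

(** single-qubit Paulis, indexed by 'I_4 : 0 = I, 1 = X, 2 = Y, 3 = Z *)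
Definition pauli1 (a : 'I_4) : 'M[C]_2 :=
  \matrix_(i < 2, j < 2)
    match nat_of_ord a, nat_of_ord i, nat_of_ord j with
    | 0, 0, 0 => 1 | 0, 1, 1 => 1
    | 1, 0, 1 => 1 | 1, 1, 0 => 1
    | 2, 0, 1 => - 'i%C | 2, 1, 0 => 'i%C
    | 3, 0, 0 => 1 | 3, 1, 1 => -1
    | _, _, _ => 0
    end.

Fixpoint pauli_seq (s : seq 'I_4) : 'M[C]_(2 ^ size s) :=
  match s return 'M[C]_(2 ^ size s) with
  | [::] => 1%:M
  | a :: s' => castmx (esym (expnS 2 (size s')), esym (expnS 2 (size s')))
                      (pauli1 a *t pauli_seq s')
  end.

Definition pauli {n : nat} (P : n.-tuple 'I_4) : 'M[C]_(2 ^ n) :=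
  castmx (congr1 (expn 2) (size_tuple P), congr1 (expn 2) (size_tuple P))
         (pauli_seq P).

Definition pauliI (n : nat) : n.-tuple 'I_4 := [tuple ord0 | _ < n].

(** tr(P rho), real for Hermitian rho *)
Definition pexp {n : nat} (rho : 'M[C]_(2 ^ n)) (P : n.-tuple 'I_4) : R :=
  complex.Re (\tr (pauli P *m rho)).

Definition M2t (n : nat) (rho : 'M[C]_(2 ^ n)) : R :=
  - log2 ((\sum_(P : n.-tuple 'I_4) pexp rho P ^+ 4) /
          (\sum_(P : n.-tuple 'I_4) pexp rho P ^+ 2)).

Definition stabilizer_state {n : nat} (chi : 'M[C]_(2 ^ n)) : Prop :=
  psd chi /\
  exists (G : {set n.-tuple 'I_4}) (phi : n.-tuple 'I_4 -> C),
    pauliI n \notin G /\ (#|G| <= 2 ^ n - 1)%N /\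
    (forall P, P \in G -> phi P = 1 \/ phi P = -1) /\
    chi = (2 ^ n)%:R^-1 *: (1%:M + \sum_(P in G) phi P *: pauli P).

Definition clifford {n : nat} (U : 'M[C]_(2 ^ n)) : Prop :=
  U *m adj U = 1%:M /\
  forall P : n.-tuple 'I_4, exists (c : C) (Q : n.-tuple 'I_4),
    c \in [:: 1; -1; 'i%C; - 'i%C] /\ U *m pauli P *m adj U = c *: pauli Q.

Definition qtens {m k : nat} (A : 'M[C]_(2 ^ m)) (B : 'M[C]_(2 ^ k))
  : 'M[C]_(2 ^ (m + k)) :=
  castmx (esym (expnD 2 m k), esym (expnD 2 m k)) (A *t B).

End Qubits.

From Pilot Require Import Defs.
From HB Require Import structures.
From mathcomp Require Import all_boot all_order all_algebra.
From mathcomp Require Import complex mxtens.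
From mathcomp Require Import reals exp.
From mathcomp Require Import ring lra.
Import Order.TTheory GRing.Theory Num.Theory.
Local Open Scope ring_scope.

(** For a Hermitian [rho] write [x_P = tr(P rho)]. The Pauli strings are
    orthogonal for the trace form, [tr(P Q) = 2^n [P = Q]], hence a basis, and
    [rho = 2^-n sum_P x_P P]. For a density matrix [x_I = 1], [|x_P| <= 1] and
    [sum_P x_P^2 = 2^n tr(rho^2) <= 2^n], so [sum_P x_P^4 = sum_P x_P^2], i.e.
    [M2t rho = 0], exactly when every [x_P] is [0] or [+-1]: the expansion of
    [rho] is then that of a stabilizer state, with [|G| <= 2^n - 1] coming from
    the purity bound. A Clifford conjugation sends Pauli strings injectively to
    Pauli strings times a phase, which is a sign since the image is Hermitian;
    so it only permutes the [|x_P|]. Finally the Pauli strings on [m + k] qubits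
    are the [P (x) Q] and [x_(P (x) Q)(rho (x) sigma) = x_P(rho) x_Q(sigma)], so
    both moments are multiplicative and the logarithm turns this into
    additivity. *)

Set Implicit Arguments.
Unset Strict Implicit.
Unset Printing Implicit Defensive.

Section MatrixTensor.
Variable K : comPzRingType.

Lemma mxtrace_castmx n n' (e e' : n = n') (A : 'M[K]_n) :
  \tr (castmx (e, e') A) = \tr A.
Proof. by case: n' / e e' => e'; rewrite castmx_id. Qed.

Lemma mulmx_castmx n n' (e e' : n = n') (A B : 'M[K]_n) :
  castmx (e, e') A *m castmx (e, e') B = castmx (e, e') (A *m B).
Proof. by case: n' / e e' => e'; rewrite !castmx_id. Qed.

Lemma castmx1 n n' (e e' : n = n') : castmx (e, e') (1%:M : 'M[K]_n) = 1%:M.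
Proof. by case: n' / e e' => e'; rewrite castmx_id. Qed.

Lemma tensmx11 m n : (1%:M : 'M[K]_m) *t (1%:M : 'M[K]_n) = 1%:M.
Proof.
apply/matrixP => i j.
case: (mxtens_indexP i) => i1 i2; case: (mxtens_indexP j) => j1 j2.
rewrite tensmxE !mxE (can_eq (@mxtens_indexK _ _)) xpair_eqE.
by case: (i1 == j1); case: (i2 == j2); rewrite ?mulr1 ?mulr0 ?mul0r.
Qed.

Lemma mxtrace_tensmx m n (A : 'M[K]_m) (B : 'M[K]_n) :
  \tr (A *t B) = \tr A * \tr B.
Proof. by rewrite /mxtrace mulr_sum; apply: eq_bigr => i _; rewrite mxE. Qed.

Lemma tensmxA m n p m' n' p' (A : 'M[K]_(m, m')) (B : 'M[K]_(n, n'))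
    (D : 'M[K]_(p, p')) :
  A *t (B *t D) = castmx (esym (mulnA _ _ _), esym (mulnA _ _ _)) ((A *t B) *t D).
Proof.
apply/matrixP => i j.
case: (mxtens_indexP i) => i1 i23; case: (mxtens_indexP i23) => i2 i3.
case: (mxtens_indexP j) => j1 j23; case: (mxtens_indexP j23) => j2 j3.
rewrite castmxE !tensmxE.
have -> : cast_ord (esym (esym (mulnA m n p)))
    (mxtens_index (i1, mxtens_index (i2, i3))) = mxtens_index (mxtens_index (i1, i2), i3).
  by apply: val_inj => /=; rewrite mulnDl -addnA mulnA.
have -> : cast_ord (esym (esym (mulnA m' n' p')))
    (mxtens_index (j1, mxtens_index (j2, j3))) = mxtens_index (mxtens_index (j1, j2), j3).
  by apply: val_inj => /=; rewrite mulnDl -addnA mulnA.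
by rewrite !tensmxE mulrA.
Qed.

Lemma tensmx_castmxl m n m' n' p q (e1 : m = m') (e2 : n = n')
    (A : 'M[K]_(m, n)) (B : 'M[K]_(p, q)) :
  castmx (e1, e2) A *t B = castmx (congr1 (muln^~ p) e1, congr1 (muln^~ q) e2) (A *t B).
Proof. by case: m' / e1; case: n' / e2; rewrite !castmx_id. Qed.

Lemma tensmx_castmxr m n m' n' p q (e1 : m = m') (e2 : n = n')
    (A : 'M[K]_(m, n)) (B : 'M[K]_(p, q)) :
  B *t castmx (e1, e2) A = castmx (congr1 (muln p) e1, congr1 (muln q) e2) (B *t A).
Proof. by case: m' / e1; case: n' / e2; rewrite !castmx_id. Qed.

Lemma row_mul_col m n p (M : 'M[K]_(m, n)) (N : 'M[K]_(n, p)) j k :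
  (row j M *m col k N) 0 0 = (M *m N) j k.
Proof. by rewrite !mxE; apply: eq_bigr => l _; rewrite !mxE. Qed.

End MatrixTensor.

Lemma quadratic_ge0_le (K : realFieldType) (a b s : K) : 0 <= a -> 0 <= b -> 0 <= s ->
  (forall t, 0 <= a - 2 * t * s + t ^+ 2 * b * s) -> s <= a * b.
Proof.
move=> a_ge0 b_ge0 s_ge0 q_ge0.
have [->|s_neq0] := eqVneq s 0; first exact: mulr_ge0.
have s_gt0 : 0 < s by rewrite lt_def s_neq0.
have [b0|b_neq0] := eqVneq b 0.
  have := q_ge0 ((a + 1) / (2 * s)); rewrite b0 mulr0 mul0r addr0.
  have -> : 2 * ((a + 1) / (2 * s)) * s = a + 1 by field; rewrite lt0r_neq0.
  lra.
have b_gt0 : 0 < b by rewrite lt_def b_neq0.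
have := q_ge0 b^-1.
have -> : a - 2 * b^-1 * s + b^-1 ^+ 2 * b * s = (a * b - s) / b by field.
by rewrite pmulr_lge0 ?invr_gt0 // subr_ge0.
Qed.

Section Qubits.
Variable R : realType.
Local Notation C := R[i].
Local Notation pauli := (@pauli R _).
Local Notation pauli1 := (pauli1 R).
Local Open Scope complex_scope.

Lemma adjM m n p (A : 'M[C]_(m, n)) (B : 'M[C]_(n, p)) :
  adj (A *m B) = adj B *m adj A.
Proof. by rewrite /adj map_mxM trmx_mul. Qed.

Lemma adjK m n (A : 'M[C]_(m, n)) : adj (adj A) = A.
Proof. by apply/matrixP => i j; rewrite !mxE conjcK. Qed.

Lemma adj_castmx m n m' n' (e1 : m = m') (e2 : n = n') (A : 'M[C]_(m, n)) :
  adj (castmx (e1, e2) A) = castmx (e2, e1) (adj A).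
Proof. by case: m' / e1; case: n' / e2; rewrite !castmx_id. Qed.

Lemma adj_tensmx m n p q (A : 'M[C]_(m, n)) (B : 'M[C]_(p, q)) :
  adj (A *t B) = adj A *t adj B.
Proof. by rewrite /adj map_mxT trmx_tens. Qed.

Lemma adjmx1 n : adj (1%:M : 'M[C]_n) = 1%:M.
Proof. by apply/matrixP => i j; rewrite !mxE conjc_nat eq_sym. Qed.

Lemma adjD m n (A B : 'M[C]_(m, n)) : adj (A + B) = adj A + adj B.
Proof. by apply/matrixP => i j; rewrite !mxE rmorphD. Qed.

Lemma adj_scale m n (c : C) (A : 'M[C]_(m, n)) : adj (c *: A) = c^*%C *: adj A.
Proof. by apply/matrixP => i j; rewrite !mxE rmorphM. Qed.

Lemma adj_col n (A : 'M[C]_n) j : adj (col j A) = row j (adj A).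
Proof. by apply/matrixP => a b; rewrite !mxE. Qed.

Lemma mxtrace_adj n (A : 'M[C]_n) : \tr (adj A) = (\tr A)^*%C.
Proof. by rewrite /mxtrace rmorph_sum; apply: eq_bigr => i _; rewrite !mxE. Qed.

Lemma conjc_real_Re (t : C) : t^*%C = t -> t = (complex.Re t)%:C.
Proof.
case: t => a b /= [h]; congr Complex.
have hb : b + b = 0 by rewrite -{1}h addNr.
lra.
Qed.

Lemma mxtrace_mul_hermitian n (A B : 'M[C]_n) : adj A = A -> adj B = B ->
  \tr (A *m B) = (complex.Re (\tr (A *m B)))%:C.
Proof.
move=> hA hB; apply: conjc_real_Re.
by rewrite -mxtrace_adj adjM hA hB mxtrace_mulC.
Qed.

(** * Pauli strings *)

Ltac complex_ring := apply/eqP; rewrite eq_complex /=; apply/andP; split; apply/eqP; ring.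

Lemma pauli1_0 : pauli1 ord0 = 1%:M.
Proof. by apply/matrixP => -[[|[|?]] ?] [[|[|?]] ?]; rewrite !mxE. Qed.

Lemma pauli1_adj a : adj (pauli1 a) = pauli1 a.
Proof.
apply/matrixP => i j; rewrite !mxE.
by case: a => [[|[|[|[|?]]]] ?] //; case: i => [[|[|?]] ?] //;
  case: j => [[|[|?]] ?] //=; complex_ring.
Qed.

Lemma pauli1_sqr a : pauli1 a *m pauli1 a = 1%:M.
Proof.
apply/matrixP => i j; rewrite !mxE !big_ord_recl big_ord0 !mxE.
by case: a => [[|[|[|[|?]]]] ?] //; case: i => [[|[|?]] ?] //;
  case: j => [[|[|?]] ?] //=; complex_ring.
Qed.

Lemma mxtrace_pauli1_mul a b : \tr (pauli1 a *m pauli1 b) = (2 * (a == b))%:R.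
Proof.
rewrite /mxtrace !big_ord_recl big_ord0 !mxE !big_ord_recl !big_ord0 !mxE.
by case: a => [[|[|[|[|?]]]] ?] //; case: b => [[|[|[|[|?]]]] ?] //=; complex_ring.
Qed.

Lemma pauli_tuple0 (P : 0.-tuple 'I_4) : pauli P = 1%:M.
Proof. by rewrite (tuple0 P) /Defs.pauli /= castmx_id. Qed.

Lemma pauli_cons n a (P : n.-tuple 'I_4) :
  pauli (cons_tuple a P) =
  castmx (esym (expnS 2 n), esym (expnS 2 n)) (pauli1 a *t pauli P).
Proof.
rewrite /Defs.pauli /=; move: (size_tuple P) (size_tuple (cons_tuple a P)).
case: P => s sz_s /= e1; case: n / e1 sz_s => sz_s e2.
by rewrite [castmx _ (pauli_seq R s)]castmx_id castmx_comp; apply: eq_castmx.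
Qed.

Lemma pauli_adj n (P : n.-tuple 'I_4) : adj (pauli P) = pauli P.
Proof.
elim: n P => [|n IH] P; first by rewrite pauli_tuple0 adjmx1.
by case/tupleP: P => a P; rewrite pauli_cons adj_castmx adj_tensmx pauli1_adj IH.
Qed.

Lemma pauli_sqr n (P : n.-tuple 'I_4) : pauli P *m pauli P = 1%:M.
Proof.
elim: n P => [|n IH] P; first by rewrite pauli_tuple0 mulmx1.
case/tupleP: P => a P.
by rewrite pauli_cons mulmx_castmx tensmx_mul pauli1_sqr IH tensmx11 castmx1.
Qed.

Lemma mxtrace_pauli_mul n (P Q : n.-tuple 'I_4) :
  \tr (pauli P *m pauli Q) = (2 ^ n * (P == Q))%:R.
Proof.
elim: n P Q => [|n IH] P Q.
  by rewrite (tuple0 P) (tuple0 Q) pauli_tuple0 eqxx mul1mx mxtrace1.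
case/tupleP: P => a P; case/tupleP: Q => b Q.
rewrite !pauli_cons mulmx_castmx mxtrace_castmx tensmx_mul mxtrace_tensmx.
rewrite mxtrace_pauli1_mul IH -natrM expnS -[cons_tuple a P == _]val_eqE /=.
by rewrite eqseq_cons val_eqE; case: (a == b); case: (P == Q); rewrite ?muln0 ?muln1.
Qed.

Lemma pauli_neq0 n (P : n.-tuple 'I_4) : pauli P != 0.
Proof.
apply/eqP => P0; have := mxtrace_pauli_mul P P.
by rewrite P0 mul0mx mxtrace0 eqxx muln1 => /esym/eqP; rewrite pnatr_eq0 expn_eq0.
Qed.

Lemma pauli_I n : pauli (pauliI n) = 1%:M.
Proof.
elim: n => [|n IH]; first by rewrite pauli_tuple0.
have -> : pauliI n.+1 = cons_tuple ord0 (pauliI n).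
  by apply: val_inj; rewrite /= enum_ordSl /= -map_comp.
by rewrite pauli_cons IH pauli1_0 tensmx11 castmx1.
Qed.

Lemma pauli_cat m k (P : m.-tuple 'I_4) (Q : k.-tuple 'I_4) :
  pauli (cat_tuple P Q) = qtens (pauli P) (pauli Q).
Proof.
elim: m P => [|m IH] P.
  rewrite (tuple0 P) pauli_tuple0 /qtens tens_scalar1mx castmx_comp.
  by rewrite /Defs.pauli castmx_comp; apply: eq_castmx.
case/tupleP: P => a P.
have -> : cat_tuple (cons_tuple a P) Q = cons_tuple a (cat_tuple P Q)
  by apply: val_inj.
rewrite pauli_cons IH /qtens tensmx_castmxr tensmxA castmx_comp pauli_cons.
by rewrite tensmx_castmxl !castmx_comp; apply: eq_castmx.
Qed.

Lemma mxtrace_pauli_sum n (S : {pred n.-tuple 'I_4}) (c : n.-tuple 'I_4 -> C) Q :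
  \tr (pauli Q *m \sum_(P in S) c P *: pauli P) = (Q \in S)%:R * c Q * (2 ^ n)%:R.
Proof.
rewrite mulmx_sumr raddf_sum /=.
have trE P : \tr (pauli Q *m (c P *: pauli P)) = c P * (2 ^ n * (Q == P))%:R.
  by rewrite -scalemxAr mxtraceZ mxtrace_pauli_mul.
have [QS|QS] := boolP (Q \in S).
  rewrite (bigD1 Q) //= big1 => [|P /andP[_ PQ]]; last first.
    by rewrite trE eq_sym (negbTE PQ) muln0 mulr0.
  by rewrite addr0 trE eqxx muln1 mul1r.
rewrite big1 ?mul0r // => P PS; rewrite trE.
by rewrite (_ : (Q == P) = false) ?muln0 ?mulr0 //; apply: contraNF QS => /eqP ->.
Qed.

Lemma eq0_pauli_traces n (A : 'M[C]_(2 ^ n)) :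
  (forall P : n.-tuple 'I_4, \tr (pauli P *m A) = 0) -> A = 0.
Proof.
(* the [4^n] trace-orthogonal Pauli strings form a basis of ['M_(2^n)] *)
move=> trA0; pose N := #|{: n.-tuple 'I_4}|.
pose X : N.-tuple 'M[C]_(2 ^ n) := [tuple pauli (enum_val i) | i < N].
have XE (i : 'I_N) : X`_i = pauli (enum_val i) by rewrite -tnth_nth tnth_mktuple.
have d_neq0 : (2 ^ n)%:R != 0 :> C by rewrite pnatr_eq0 expn_eq0.
have coordE (k : 'I_N -> C) j :
    \tr (pauli (enum_val j) *m \sum_(i < N) k i *: X`_i) = k j * (2 ^ n)%:R.
  rewrite mulmx_sumr raddf_sum (bigD1 j) //= big1 => [|i ij]; last first.
    rewrite XE -scalemxAr mxtraceZ mxtrace_pauli_mul (inj_eq enum_val_inj).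
    by rewrite eq_sym (negbTE ij) muln0 mulr0.
  by rewrite addr0 XE -scalemxAr mxtraceZ mxtrace_pauli_mul eqxx muln1.
have freeX : free X.
  apply/freeP => k k0 j; have := coordE k j.
  rewrite k0 mulmx0 mxtrace0 => /esym/eqP.
  by rewrite mulf_eq0 (negbTE d_neq0) orbF => /eqP.
have basisX : basis_of fullv X.
  rewrite basisEfree freeX subvf size_tuple dimvf /dim /=.
  by rewrite /N card_tuple card_ord -expnMn.
have A_span : A \in <<X>>%VS by rewrite (span_basis basisX) memvf.
rewrite (coord_span A_span); apply: big1 => j _.
have := coordE (coord X ^~ A) j; rewrite -(coord_span A_span) trA0 => /esym/eqP.
by rewrite mulf_eq0 (negbTE d_neq0) orbF => /eqP ->; rewrite scale0r.
Qed.

Lemma pauli_expansion n (A : 'M[C]_(2 ^ n)) :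
  A = (2 ^ n)%:R^-1 *: \sum_(P : n.-tuple 'I_4) \tr (pauli P *m A) *: pauli P.
Proof.
apply/eqP; rewrite -subr_eq0; apply/eqP/eq0_pauli_traces => Q.
rewrite mulmxBr raddfB /= -scalemxAr mxtraceZ.
rewrite (mxtrace_pauli_sum predT (fun P => \tr (pauli P *m A))) mul1r mulrCA.
by rewrite mulVf ?mulr1 ?subrr // pnatr_eq0 expn_eq0.
Qed.

Definition pauli_moment n (rho : 'M[C]_(2 ^ n)) k :=
  \sum_(P : n.-tuple 'I_4) pexp rho P ^+ k.

Lemma M2tE n (rho : 'M[C]_(2 ^ n)) :
  M2t rho = - log2 (pauli_moment rho 4 / pauli_moment rho 2).
Proof. by []. Qed.

Lemma pexpE n (rho : 'M[C]_(2 ^ n)) P : adj rho = rho ->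
  \tr (pauli P *m rho) = (pexp rho P)%:C.
Proof. by move=> rhoH; apply: mxtrace_mul_hermitian (pauli_adj P) rhoH. Qed.

Lemma pexp_I n (rho : 'M[C]_(2 ^ n)) : \tr rho = 1 -> pexp rho (pauliI n) = 1.
Proof. by move=> tr1; rewrite /pexp pauli_I mul1mx tr1. Qed.

Lemma pauli_moment_gt0 n (rho : 'M[C]_(2 ^ n)) k : \tr rho = 1 -> ~~ odd k ->
  0 < pauli_moment rho k.
Proof.
move=> tr1 k_even; rewrite /pauli_moment (bigD1 (pauliI n)) //= pexp_I // expr1n.
apply: lt_le_trans ltr01 _; rewrite lerDl sumr_ge0 // => P _.
exact: exprn_even_ge0.
Qed.

Lemma M2t_eq0 n (rho : 'M[C]_(2 ^ n)) : \tr rho = 1 ->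
  M2t rho = 0 <-> pauli_moment rho 4 = pauli_moment rho 2.
Proof.
move=> tr1; have m2_gt0 := pauli_moment_gt0 (k := 2) tr1 isT.
have m4_gt0 := pauli_moment_gt0 (k := 4) tr1 isT.
have ln2_gt0 : 0 < ln (2 : R) by rewrite ln_gt0 // ltr1n.
rewrite M2tE /log2; split => [/eqP|->]; last first.
  by rewrite divff ?lt0r_neq0 // ln1 mul0r oppr0.
rewrite oppr_eq0 mulf_eq0 invr_eq0 (gt_eqF ln2_gt0) orbF ln_eq0 ?divr_gt0 //.
by move=> /eqP ratio1; rewrite -[LHS](divfK (lt0r_neq0 m2_gt0)) ratio1 mul1r.
Qed.

(** * Positivity bounds *)

Lemma form2_cauchy_schwarz (a b r : C) : 0 <= a -> 0 <= b ->
  (forall y : C, 0 <= a + y * r + y^*%C * r^*%C + y^*%C * y * b) ->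
  complex.Re r ^+ 2 + complex.Im r ^+ 2 <= complex.Re a * complex.Re b.
Proof.
case: a => a1 a2; case: b => b1 b2; case: r => x y.
rewrite !lecE /= => /andP[_ a_ge0] /andP[_ b_ge0] q_ge0.
apply: quadratic_ge0_le => //; first by rewrite addr_ge0 ?sqr_ge0.
(* at [y = - t r^*] the form is [a - 2 t |r|^2 + t^2 b |r|^2] *)
move=> t; have := q_ge0 (Complex (- t * x) (t * y)).
by rewrite lecE /= => /andP[_ ?]; nra.
Qed.

Lemma quadform_delta n (rho : 'M[C]_n) j k :
  (adj (col j 1%:M) *m rho *m col k 1%:M) 0 0 = rho j k.
Proof. by rewrite adj_col adjmx1 -row_mul row_mul_col mul1mx mulmx1. Qed.

Lemma quadformD n (rho : 'M[C]_n) (u w : 'cV[C]_n) (y : C) :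
  (adj (u + y *: w) *m rho *m (u + y *: w)) 0 0 =
  (adj u *m rho *m u) 0 0 + y * (adj u *m rho *m w) 0 0
  + y^*%C * (adj w *m rho *m u) 0 0 + y^*%C * y * (adj w *m rho *m w) 0 0.
Proof.
rewrite adjD adj_scale !mulmxDl !mulmxDr -!scalemxAl -!scalemxAr !mxE.
ring.
Qed.

Lemma hermitian_entry n (A : 'M[C]_n) j k : adj A = A -> A k j = (A j k)^*%C.
Proof. by move=> AH; rewrite -{1}AH !mxE. Qed.

Lemma psd_diag_ge0 n (rho : 'M[C]_n) j : psd rho -> 0 <= rho j j.
Proof. by case=> _ /(_ (col j 1%:M)); rewrite quadform_delta. Qed.

Lemma psd_entry_le n (rho : 'M[C]_n) j k : psd rho ->
  complex.Re (rho j k) ^+ 2 + complex.Im (rho j k) ^+ 2 <=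
  complex.Re (rho j j) * complex.Re (rho k k).
Proof.
move=> rho_psd; have [rhoH q_ge0] := rho_psd.
apply: form2_cauchy_schwarz; try exact: psd_diag_ge0.
move=> y; have := q_ge0 (col j 1%:M + y *: col k 1%:M).
by rewrite quadformD !quadform_delta (hermitian_entry j k rhoH).
Qed.

Lemma psd_mxtrace_conj n (rho A : 'M[C]_n) : psd rho -> adj A = A ->
  0 <= \tr (A *m rho *m A).
Proof.
move=> [_ q_ge0] AH; rewrite /mxtrace; apply: sumr_ge0 => j _.
by rewrite -row_mul_col row_mul -{1}AH -adj_col.
Qed.

Lemma pexp_sqr_le1 n (rho : 'M[C]_(2 ^ n)) P : density rho -> pexp rho P ^+ 2 <= 1.
Proof.
move=> [rho_psd tr1]; have rhoH := rho_psd.1.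
(* [tr((1 + c P) rho (1 + c P)) = 2 (1 + c x_P)] for [c = +-1]. *)
have shifted_ge0 (c : R) : c ^+ 2 = 1 -> 0 <= 1 + c * pexp rho P.
  move=> c2; pose A := 1%:M + c%:C *: pauli P.
  have AH : adj A = A by rewrite adjD adj_scale adjmx1 pauli_adj conjc_real.
  have := psd_mxtrace_conj rho_psd AH.
  rewrite mxtrace_mulC mulmxA mulmxDl !mulmxDr !mul1mx !mulmx1 -scalemxAr -scalemxAl.
  rewrite pauli_sqr scalerA !mulmxDl !mxtraceD -!scalemxAl !mxtraceZ mul1mx tr1 pexpE //.
  by rewrite -!rmorphM -expr2 c2 lecE /= => /andP[_]; lra.
have := shifted_ge0 1 (expr1n _ 2).
have := shifted_ge0 (-1) (etrans (sqrrN 1) (expr1n _ 2)).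
by rewrite !mul1r !mulN1r; nra.
Qed.

Lemma mxtrace_sqr_le1 n (rho : 'M[C]_n) : psd rho -> \tr rho = 1 ->
  complex.Re (\tr (rho *m rho)) <= 1.
Proof.
move=> rho_psd tr1; have rhoH := rho_psd.1.
have Re_sum I (r : seq I) (F : I -> C) :
    complex.Re (\sum_(i <- r) F i) = \sum_(i <- r) complex.Re (F i).
  exact: (raddf_sum (@complex.Re R : Rcomplex R -> R)).
have -> : complex.Re (\tr (rho *m rho)) =
    \sum_j \sum_k (complex.Re (rho j k) ^+ 2 + complex.Im (rho j k) ^+ 2).
  rewrite Re_sum; apply: eq_bigr => j _; rewrite mxE Re_sum.
  apply: eq_bigr => k _; rewrite (hermitian_entry j k rhoH).
  by case: (rho j k) => x y /=; ring.
apply: le_trans (_ : _ <= \sum_j \sum_k complex.Re (rho j j) * complex.Re (rho k k)) _.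
  by apply: ler_sum => j _; apply: ler_sum => k _; apply: psd_entry_le.
by rewrite -big_distrlr /= -Re_sum -/(\tr rho) tr1 /= mulr1.
Qed.

Lemma pauli_moment2E n (rho : 'M[C]_(2 ^ n)) : adj rho = rho ->
  pauli_moment rho 2 = (2 ^ n)%:R * complex.Re (\tr (rho *m rho)).
Proof.
move=> rhoH; have d_neq0 : (2 ^ n)%:R != 0 :> R by rewrite pnatr_eq0 expn_eq0.
suff -> : \tr (rho *m rho) = ((2 ^ n)%:R^-1 * pauli_moment rho 2)%:C.
  by rewrite /= mulrA mulfV ?mul1r.
rewrite {2}[rho]pauli_expansion -scalemxAr mxtraceZ mulmx_sumr raddf_sum /=.
rewrite rmorphM rmorph_sum fmorphV rmorph_nat; congr (_ * _).
apply: eq_bigr => P _.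
by rewrite -scalemxAr mxtraceZ (mxtrace_mulC rho) pexpE // -rmorphM expr2.
Qed.

(** * Tensor products *)

Lemma qtens_mul m k (A B : 'M[C]_(2 ^ m)) (D E : 'M[C]_(2 ^ k)) :
  qtens A D *m qtens B E = qtens (A *m B) (D *m E).
Proof. by rewrite /qtens mulmx_castmx tensmx_mul. Qed.

Lemma mxtrace_qtens m k (A : 'M[C]_(2 ^ m)) (D : 'M[C]_(2 ^ k)) :
  \tr (qtens A D) = \tr A * \tr D.
Proof. by rewrite /qtens mxtrace_castmx mxtrace_tensmx. Qed.

Lemma pexp_qtens m k (rho : 'M[C]_(2 ^ m)) (sigma : 'M[C]_(2 ^ k)) P Q :
  adj rho = rho -> adj sigma = sigma ->
  pexp (qtens rho sigma) (cat_tuple P Q) = pexp rho P * pexp sigma Q.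
Proof.
move=> rhoH sigmaH; rewrite /pexp pauli_cat qtens_mul mxtrace_qtens.
by rewrite !pexpE // -rmorphM.
Qed.

Lemma big_cat_tuple m k (F : (m + k).-tuple 'I_4 -> R) :
  \sum_(P : (m + k).-tuple 'I_4) F P =
  \sum_(P : m.-tuple 'I_4) \sum_(Q : k.-tuple 'I_4) F (cat_tuple P Q).
Proof.
rewrite pair_big /=.
have cat_bij : bijective (fun PQ : m.-tuple 'I_4 * k.-tuple 'I_4 => cat_tuple PQ.1 PQ.2).
  apply: inj_card_bij; last by rewrite card_prod !card_tuple card_ord expnD.
  move=> [P1 Q1] [P2 Q2] /= /(congr1 val) /= /eqP.
  by rewrite eqseq_cat ?size_tuple // => /andP[/eqP/val_inj -> /eqP/val_inj ->].
by rewrite (reindex _ (onW_bij _ cat_bij)).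
Qed.

Lemma pauli_moment_qtens m k (rho : 'M[C]_(2 ^ m)) (sigma : 'M[C]_(2 ^ k)) j :
  adj rho = rho -> adj sigma = sigma ->
  pauli_moment (qtens rho sigma) j = pauli_moment rho j * pauli_moment sigma j.
Proof.
move=> rhoH sigmaH; rewrite /pauli_moment big_cat_tuple mulr_suml.
apply: eq_bigr => P _; rewrite mulr_sumr; apply: eq_bigr => Q _.
by rewrite pexp_qtens // exprMn.
Qed.

Lemma M2t_qtens m k (rho : 'M[C]_(2 ^ m)) (sigma : 'M[C]_(2 ^ k)) :
  density rho -> density sigma -> M2t (qtens rho sigma) = M2t rho + M2t sigma.
Proof.
move=> [[rhoH _] tr_rho] [[sigmaH _] tr_sigma].
have ratio_pos n (A : 'M[C]_(2 ^ n)) : \tr A = 1 ->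
    pauli_moment A 4 / pauli_moment A 2 \in Num.pos.
  move=> trA; rewrite posrE divr_gt0 //.
    exact: (pauli_moment_gt0 (k := 4) trA isT).
  exact: (pauli_moment_gt0 (k := 2) trA isT).
rewrite !M2tE !pauli_moment_qtens // /log2 -mulf_div.
by rewrite (lnM (ratio_pos _ _ tr_rho) (ratio_pos _ _ tr_sigma)) mulrDl opprD.
Qed.

(** * Clifford invariance *)

Lemma unitary_conjM n (U A B : 'M[C]_n) : adj U *m U = 1%:M ->
  (U *m A *m adj U) *m (U *m B *m adj U) = U *m (A *m B) *m adj U.
Proof.
move=> UU; rewrite !mulmxA -[U *m A *m adj U *m U]mulmxA UU mulmx1.
by rewrite -!mulmxA.
Qed.

Lemma mxtrace_unitary_conj n (U A : 'M[C]_n) : adj U *m U = 1%:M ->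
  \tr (U *m A *m adj U) = \tr A.
Proof. by move=> UU; rewrite mxtrace_mulC mulmxA UU mul1mx. Qed.

Lemma real_phase_sign (c : C) : c \in [:: 1; -1; 'i%C; -'i%C] -> c^*%C = c ->
  exists s : bool, c = (-1) ^+ s.
Proof.
rewrite !inE => /or4P[] /eqP ->; [by exists false | by exists true | |];
  by move=> /eqP; rewrite eq_complex /= => /andP[_ /eqP]; lra.
Qed.

Lemma clifford_conj_pauli n (U : 'M[C]_(2 ^ n)) : clifford U ->
  exists2 f : n.-tuple 'I_4 -> n.-tuple 'I_4, injective f &
    forall P, exists s : bool, U *m pauli P *m adj U = (-1) ^+ s *: pauli (f P).
Proof.
move=> [UU' cU]; have UU := mulmx1C UU'.
have /fin_all_exists[f fP] : forall P, exists Q : n.-tuple 'I_4,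
    exists s : bool, U *m pauli P *m adj U = (-1) ^+ s *: pauli Q.
  move=> P; have [c [Q [c_phase UPU]]] := cU P.
  (* the phase is real because [U P U^+] is Hermitian *)
  have [|s c_sign] := real_phase_sign c_phase; last by exists Q, s; rewrite -c_sign.
  have : adj (U *m pauli P *m adj U) = U *m pauli P *m adj U.
    by rewrite !adjM adjK pauli_adj mulmxA.
  rewrite UPU adj_scale pauli_adj => /eqP; rewrite -subr_eq0 -scalerBl scaler_eq0.
  by rewrite (negbTE (pauli_neq0 Q)) orbF subr_eq0 => /eqP.
(* conjugation preserves [tr(P P')], which vanishes unless [P = P'] *)
exists f => // P P' fPP'; have [s UPU] := fP P; have [s' UP'U] := fP P'.
have := mxtrace_pauli_mul P P'.
rewrite -(mxtrace_unitary_conj _ UU) -unitary_conjM // UPU UP'U fPP'.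
rewrite -scalemxAl -scalemxAr !mxtraceZ mxtrace_pauli_mul eqxx muln1.
case: eqP => // _ /eqP; rewrite muln0 !mulf_eq0 !signr_eq0 /=.
by rewrite pnatr_eq0 expn_eq0.
Qed.

Lemma pexp_clifford n (U rho : 'M[C]_(2 ^ n)) P Q (s : bool) :
  adj U *m U = 1%:M -> U *m pauli P *m adj U = (-1) ^+ s *: pauli Q ->
  pexp (U *m rho *m adj U) Q = (-1) ^+ s * pexp rho P.
Proof.
move=> UU UPU; rewrite /pexp.
have -> : pauli Q = (-1) ^+ s *: (U *m pauli P *m adj U).
  by rewrite UPU scalerA -signr_addb addbb scale1r.
rewrite -scalemxAl unitary_conjM // mxtraceZ mxtrace_unitary_conj //.
by case: s {UPU}; rewrite /= ?expr0 ?expr1 ?mul1r ?mulN1r //; case: (\tr _).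
Qed.

Lemma pauli_moment_clifford n (U rho : 'M[C]_(2 ^ n)) k : clifford U -> ~~ odd k ->
  pauli_moment (U *m rho *m adj U) k = pauli_moment rho k.
Proof.
move=> cU k_even; have UU := mulmx1C cU.1.
have [f f_inj fP] := clifford_conj_pauli cU.
rewrite /pauli_moment (reindex_inj f_inj); apply: eq_bigr => P _.
have [s UPU] := fP P; rewrite (pexp_clifford _ UU UPU) exprMn -exprM.
by rewrite -signr_odd oddM (negbTE k_even) andbF expr0 mul1r.
Qed.

(** * Stabilizer states *)

Lemma pauli_moment4_eq2 n (rho : 'M[C]_(2 ^ n)) : density rho ->
  pauli_moment rho 4 = pauli_moment rho 2 <-> forall P, pexp rho P \in [:: 0; 1; -1].
Proof.
move=> rhoD; split => [m4_eq_m2 P|pexp_sign]; last first.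
  apply: eq_bigr => P _; rewrite -[4%N]/(2 * 2)%N exprM.
  move: (pexp_sign P); rewrite !inE => /or3P[] /eqP ->;
  by rewrite ?sqrrN ?expr0n ?expr1n.
have term_ge0 Q : 0 <= pexp rho Q ^+ 2 - pexp rho Q ^+ 4.
  have := pexp_sqr_le1 Q rhoD; rewrite -[4%N]/(2 * 2)%N exprM.
  by have := sqr_ge0 (pexp rho Q); nra.
have /psumr_eq0P/(_ P isT) : \sum_Q (pexp rho Q ^+ 2 - pexp rho Q ^+ 4) = 0.
  by rewrite sumrB -/(pauli_moment rho 2) -/(pauli_moment rho 4) m4_eq_m2 subrr.
move=> /(_ (fun Q _ => term_ge0 Q)) /eqP.
rewrite -[4%N]/(2 * 2)%N exprM -{1}[_ ^+ 2]mulr1 -mulrBr mulf_eq0 subr_eq0.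
by rewrite expf_eq0 /= [1 == _]eq_sym sqrf_eq1 !inE.
Qed.

Lemma stabilizer_pexp n (chi : 'M[C]_(2 ^ n)) P :
  stabilizer_state chi -> pexp chi P \in [:: 0; 1; -1].
Proof.
case=> _ [G [phi [IG [_ [phi_sign ->]]]]].
have d_neq0 : (2 ^ n)%:R != 0 :> C by rewrite pnatr_eq0 expn_eq0.
rewrite /pexp -scalemxAr mxtraceZ mulmxDr mxtraceD mxtrace_pauli_sum.
rewrite -(pauli_I n) mxtrace_pauli_mul natrM [(2 ^ n)%:R * _]mulrC -mulrDl.
rewrite mulrCA mulVf // mulr1.
(* [tr(P chi) = [P == I] + [P \in G] phi P] *)
have [->|_] := eqVneq P (pauliI n).
  by rewrite (negbTE IG) mul0r addr0 /= !inE eqxx orbT.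
have [PG|PG] := boolP (P \in G); rewrite /= add0r; last by rewrite mul0r !inE eqxx.
by rewrite mul1r; case: (phi_sign P PG) => ->; rewrite /= !inE eqxx ?orbT.
Qed.

Lemma pauli_support_card n (rho : 'M[C]_(2 ^ n)) : density rho ->
  (forall P, pexp rho P \in [:: 0; 1; -1]) ->
  (#|[set P | pexp rho P != 0%R]| <= 2 ^ n)%N.
Proof.
move=> [rho_psd tr1] pexp_sign.
have card_moment : #|[set P | pexp rho P != 0]|%:R = pauli_moment rho 2.
  rewrite -sumr_const big_mkcond; apply: eq_bigr => P _; rewrite inE.
  move: (pexp_sign P); rewrite !inE => /or3P[] /eqP ->;
  by rewrite ?eqxx ?oppr_eq0 ?oner_eq0 /= ?sqrrN ?expr0n ?expr1n.
rewrite -(ler_nat R) card_moment pauli_moment2E; last exact: rho_psd.1.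
by rewrite -[X in _ <= X]mulr1 ler_wpM2l // mxtrace_sqr_le1.
Qed.

Lemma stabilizer_of_pexp n (rho : 'M[C]_(2 ^ n)) : density rho ->
  (forall P, pexp rho P \in [:: 0; 1; -1]) -> stabilizer_state rho.
Proof.
move=> rhoD pexp_sign; have [rho_psd tr1] := rhoD; have rhoH := rho_psd.1.
have pexpI := pexp_I tr1.
pose G := [set P | pexp rho P != 0] :\ pauliI n.
split => //; exists G, (fun P => (pexp rho P)%:C).
split; [|split; [|split]].
- by rewrite !inE eqxx.
- have := pauli_support_card rhoD pexp_sign.
  by rewrite (cardsD1 (pauliI n)) !inE pexpI oner_eq0 /= -/G leq_subRL ?expn_gt0.
- move=> P; rewrite !inE => /andP[_].
  move: (pexp_sign P); rewrite !inE => /or3P[] /eqP -> //; rewrite ?eqxx // => _.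
  + by left; apply: rmorph1.
  + by right; apply: rmorphN1.
rewrite {1}[rho]pauli_expansion; congr (_ *: _).
rewrite (bigD1 (pauliI n)) //= pexpE // pexpI pauli_I scale1r; congr (_ + _).
rewrite big_mkcond [RHS]big_mkcond; apply: eq_bigr => P _; rewrite !inE pexpE //.
by case: (P != pauliI n); case: eqP => //= ->; rewrite scale0r.
Qed.

Lemma M2t_eq0_stabilizer n (rho : 'M[C]_(2 ^ n)) : density rho ->
  M2t rho = 0 <-> stabilizer_state rho.
Proof.
move=> rhoD; split => [/(M2t_eq0 rhoD.2) /(pauli_moment4_eq2 rhoD)|chiS].
  exact: stabilizer_of_pexp.
by apply/(M2t_eq0 rhoD.2)/(pauli_moment4_eq2 rhoD) => P; apply: stabilizer_pexp.
Qed.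

End Qubits.

Theorem mainTheorem4 (R : realType) :
  (* (i) *)
  (forall (n : nat), (0 < n)%N ->
     forall rho : 'M[R[i]]_(2 ^ n), density rho ->
       (M2t rho = 0 <-> stabilizer_state rho)) /\
  (* (ii) *)
  (forall (n : nat), (0 < n)%N ->
     forall U rho : 'M[R[i]]_(2 ^ n), clifford U -> density rho ->
       M2t (U *m rho *m adj U) = M2t rho) /\
  (* (iii) *)
  (forall (m k : nat), (0 < m)%N -> (0 < k)%N ->
     forall (rho : 'M[R[i]]_(2 ^ m)) (sigma : 'M[R[i]]_(2 ^ k)),
       density rho -> density sigma ->
       M2t (qtens rho sigma) = M2t rho + M2t sigma /\
       (stabilizer_state sigma -> M2t (qtens rho sigma) = M2t rho)).
Proof.
split; first by move=> n _ rho; apply: M2t_eq0_stabilizer.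
split.
  by move=> n _ U rho cU _; rewrite !M2tE !pauli_moment_clifford.
move=> m k _ _ rho sigma rhoD sigmaD; rewrite M2t_qtens //; split => // sigmaS.
by rewrite (proj2 (M2t_eq0_stabilizer sigmaD) sigmaS) addr0.
Qed.
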